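(* Let $K\in\mathbb{N}$, $\mathbf{A}=(A_1,\dots,A_K)$ with $A_k>0$, and $[\mathbf{0},\mathbf{A}]=\{\mathbf{x}\in\mathbb{R}^K:0\le x_k\le A_k,\ k=1,\dots,K\}$. Let $f\colon[\mathbf{0},\mathbf{A}]\to\mathbb{R}$ be $L$-Lipschitz continuous with respect to the $\ell_1$-norm and assume $f(\mathbf{y})=0$ for some $\mathbf{y}\in[\mathbf{0},\mathbf{A}]$. Then \[ \int_{[\mathbf{0},\mathbf{A}]}|f(\mathbf{x})|\,\lambda^K(\mathrm{d}\mathbf{x})\le\frac L2\Big(\prod_{k=1}^K A_k\Big)\Big(\sum_{k=1}^K A_k\Big). \] In particular, if $A_k=\varepsilon$ for all $k$, then $\int_{[0,\varepsilon]^K}|f(\mathbf{x})|\,\lambda^K(\mathrm{d}\mathbf{x})\le\varepsilon^{K+1}\frac{LK}{2}$.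
   Context: $\lambda^K$ is Lebesgue measure on $\mathbb{R}^K$; Lipschitz continuity is $|f(\mathbf{x})-f(\mathbf{x}')|\le L\|\mathbf{x}-\mathbf{x}'\|_1$. *)

From HB Require Import structures.
From mathcomp Require Import all_boot all_order all_algebra.
From mathcomp Require Import all_classical all_reals all_analysis.
Set Implicit Arguments. Unset Strict Implicit. Unset Printing Implicit Defensive.
Import Order.TTheory GRing.Theory Num.Theory.
Local Open Scope classical_set_scope.
Local Open Scope ring_scope.

(* The K-dimensional Lebesgue measure lambda^K on R^K, with R^K represented
   as K.-tuple R (equipped by the library with the product sigma-algebra
   generated by the coordinate projections). *)
Fixpoint lebesgueK (R : realType) (n : nat) : set (n.-tuple R) -> \bar R :=
  match n with
  | 0 => fun A => @dirac _ (0.-tuple R) [tuple] R A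
  | n'.+1 => fun A =>
      ((@lebesgue_measure R) \x (@lebesgueK R n'))%E
        ((fun p : R * n'.-tuple R => [tuple of p.1 :: p.2]) @^-1` A)
  end.

Definition box (R : realType) (K : nat) (A : K.-tuple R) : set (K.-tuple R) :=
  [set x | forall k : 'I_K, 0 <= tnth x k <= tnth A k].

Definition l1dist (R : realType) (K : nat) (x y : K.-tuple R) : R :=
  \sum_(k < K) `|tnth x k - tnth y k|.

Definition lipschitz_l1_on (R : realType) (K : nat) (D : set (K.-tuple R))
    (f : K.-tuple R -> R) (L : R) : Prop :=
  forall x x', D x -> D x' -> `|f x - f x'| <= L * l1dist x x'.

(* Since f vanishes at y, |f x| <= L |x - y|_1 on the box, so it suffices to
   bound the integral of the l1 distance to a point y of the box.  By Fubini
   this integral splits over the coordinates: the k-th one contributes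
   (prod_(j != k) A_j) * int_0^(A_k) |t - y_k| dt, and the last integral is at
   most A_k^2 / 2 because t |-> |t - y_k| lies below its chord on [0, A_k].
   As Lebesgue measure on R^K is an iterated product, the splitting is an
   induction on K. *)

From HB Require Import structures.
From mathcomp Require Import all_boot all_order all_algebra.
From mathcomp Require Import all_classical all_reals all_analysis.
From mathcomp Require Import measurable_realfun ring lra.
Set Implicit Arguments. Unset Strict Implicit. Unset Printing Implicit Defensive.
Import Order.TTheory GRing.Theory Num.Theory numFieldNormedType.Exports.
Local Open Scope classical_set_scope.
Local Open Scope ring_scope.

Section integral_facts.
Local Open Scope ereal_scope.
Context d (T : measurableType d) (R : realType).

(* No measurability is needed (both sides are suprema over simple functions
   below the integrand); the theorem does not assume f measurable. *)
Lemma ge0_le_integral_nomeas (mu : set T -> \bar R) (D : set T)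
    (f g : T -> \bar R) :
  (forall x, D x -> 0 <= f x) -> (forall x, D x -> f x <= g x) ->
  \int[mu]_(x in D) f x <= \int[mu]_(x in D) g x.
Proof.
move=> f0 fg; have g0 x : D x -> 0 <= g x.
  by move=> Dx; exact: le_trans (f0 _ Dx) (fg _ Dx).
have neg0 (h : T -> \bar R) : (forall x, D x -> 0 <= h x) -> (h \_ D)^\- = cst 0.
  move=> h0; apply/funext => x; rewrite funenegE patchE.
  case: ifPn => [/set_mem Dx|_]; last by rewrite oppe0 maxxx.
  by apply/max_idPr; rewrite leeNl oppe0 h0.
rewrite /integral (neg0 _ f0) (neg0 _ g0); apply: leeD => //.
apply: ereal_sup_le => _ [h hf <-]; exists h => //= x.
apply: le_trans (hf x) _; rewrite !funeposE !patchE; case: ifPn => [/set_mem Dx|//].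
by rewrite (max_idPl (f0 _ Dx)) (max_idPl (g0 _ Dx)) fg.
Qed.

End integral_facts.

Section sigma_finite_constructions.
Local Open Scope ereal_scope.
Context d1 d2 (T1 : measurableType d1) (T2 : measurableType d2) (R : realType).

(* The library's canonical sigma-finite structure on [_ \x _] only covers
   products of subprobabilities. *)
Lemma sigma_finite_product_measure1 (m1 : {sigma_finite_measure set T1 -> \bar R})
    (m2 : {sigma_finite_measure set T2 -> \bar R}) :
  sigma_finite setT (m1 \x m2).
Proof.
have /sigma_finiteP[F [FT ndF Ffin]] := sigma_finiteT m1.
have /sigma_finiteP[G [GT ndG Gfin]] := sigma_finiteT m2.
exists (fun k => F k `*` G k).
  apply/seteqP; split=> // -[x y] _.
  have [i _ Fx] : (\bigcup_i F i) x by rewrite -FT.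
  have [j _ Gy] : (\bigcup_j G j) y by rewrite -GT.
  exists (maxn i j) => //; split.
  - by move/subsetPset: (ndF _ _ (leq_maxl i j)); apply.
  - by move/subsetPset: (ndG _ _ (leq_maxr i j)); apply.
move=> k; have [mF Flty] := Ffin k; have [mG Glty] := Gfin k.
split; first exact: measurableX.
by rewrite product_measure1E // lte_mul_pinfty // ge0_fin_numE.
Qed.

Lemma sigma_finite_pushforward (mu : {measure set T1 -> \bar R})
    (f : T1 -> T2) (g : T2 -> T1) :
  sigma_finite setT mu -> measurable_fun setT g -> cancel f g ->
  sigma_finite setT (pushforward mu f).
Proof.
move=> [F FT Fm] mg fK; exists (fun i => g @^-1` F i).
  apply/seteqP; split=> // z _.
  have [i _ Fi] : (\bigcup_i F i) (g z) by rewrite -FT.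
  by exists i.
move=> i; split; first by rewrite -[X in measurable X]setTI; exact: mg (Fm i).1.
rewrite /pushforward; have -> : f @^-1` (g @^-1` F i) = F i.
  by apply/seteqP; split=> x /=; rewrite fK.
exact: (Fm i).2.
Qed.

End sigma_finite_constructions.

Section lebesgue_cons.
Context {R : realType} {n : nat}.

Definition cons_pair (p : R * n.-tuple R) : n.+1.-tuple R := [tuple of p.1 :: p.2].

Lemma measurable_cons_pair : measurable_fun setT cons_pair.
Proof. exact: measurable_cons. Qed.

Definition uncons (x : n.+1.-tuple R) : R * n.-tuple R := (thead x, [tuple of behead x]).

Lemma measurable_uncons : measurable_fun setT uncons.
Proof.
by apply/measurable_fun_pairP; split; [exact: measurable_tnth|exact: measurable_behead].
Qed.

Lemma cons_pairK : cancel cons_pair uncons.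
Proof. by case=> a t; congr pair; apply: val_inj. Qed.

Variable m : {sigma_finite_measure set (n.-tuple R) -> \bar R}.

Definition lebesgue_cons := pushforward ((@lebesgue_measure R) \x m)%E cons_pair.

(* Inherited from the library's measure structure on [pushforward], which
   depends on a measurability proof that inference cannot supply. *)
Let lebesgue_cons0 : lebesgue_cons set0 = 0%E.
Proof. apply: measure0; exact: measurable_cons_pair. Qed.

Let lebesgue_cons_ge0 A : (0 <= lebesgue_cons A)%E.
Proof. apply: measure_ge0; exact: measurable_cons_pair. Qed.

Let lebesgue_cons_sigma_additive : semi_sigma_additive lebesgue_cons.
Proof. apply: measure_semi_sigma_additive; exact: measurable_cons_pair. Qed.

HB.instance Definition _ := isMeasure.Build _ _ _ lebesgue_cons
  lebesgue_cons0 lebesgue_cons_ge0 lebesgue_cons_sigma_additive.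

Let lebesgue_cons_sigma_finite : sigma_finite setT lebesgue_cons.
Proof.
exact: (sigma_finite_pushforward (mu := ((@lebesgue_measure R) \x m)%E)
  (sigma_finite_product_measure1 _ _) measurable_uncons cons_pairK).
Qed.

HB.instance Definition _ :=
  Measure_isSigmaFinite.Build _ _ _ lebesgue_cons lebesgue_cons_sigma_finite.

End lebesgue_cons.

(* [lebesgueK] carrying the sigma-finite measure structure Fubini needs. *)
Fixpoint lebesgue_tuple (R : realType) (n : nat) :
    {sigma_finite_measure set (n.-tuple R) -> \bar R} :=
  match n with
  | 0 => @dirac _ (0.-tuple R) [tuple] R
  | n'.+1 => lebesgue_cons (lebesgue_tuple R n')
  end.

Lemma lebesgue_tupleE (R : realType) (n : nat) :
  lebesgue_tuple R n = @lebesgueK R n :> (set _ -> \bar R).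
Proof.
elim: n => [//|n IH] /=; apply/funext => A.
by rewrite /lebesgue_cons /pushforward /product_measure1 IH.
Qed.

Lemma lebesgue_measure_itv0 (R : realType) (a : R) : 0 <= a ->
  lebesgue_measure (`[0, a]%classic : set R) = a%:E.
Proof.
move=> a0; rewrite lebesgue_measure_itv /= lte_fin sube0.
by case: (eqVneq a 0) => [->|a_neq0]; rewrite ?ltxx // lt_neqAle eq_sym a_neq0 a0.
Qed.

Section box.
Context (R : realType).

Lemma big_tnth_cons (op : R -> R -> R) (idx : R) n (a : R) (A : n.-tuple R) :
  \big[op/idx]_(k < n.+1) tnth [tuple of a :: A] k =
  op a (\big[op/idx]_(k < n) tnth A k).
Proof. by rewrite big_ord_recl; congr op; apply: eq_bigr => k _; rewrite tnthS. Qed.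

Lemma box_cons n (a t : R) (A x : n.-tuple R) :
  box [tuple of a :: A] [tuple of t :: x] <-> 0 <= t <= a /\ box A x.
Proof.
split=> [bx|[ta bx] k].
  by split=> [|k]; [exact: bx ord0|have := bx (lift ord0 k); rewrite !tnthS].
by case: (unliftP ord0 k) => [j ->|->] //; rewrite !tnthS.
Qed.

Lemma preimage_cons_pair_box n (a : R) (A : n.-tuple R) :
  cons_pair @^-1` box [tuple of a :: A] = `[0, a] `*` box A.
Proof. by apply/seteqP; split=> -[t x]; rewrite /= box_cons in_itv. Qed.

Lemma measurable_box n (A : n.-tuple R) : measurable (box A).
Proof.
have -> : box A =
    \bigcap_(k in [set: 'I_n]) (fun x => tnth x k) @^-1` `[0, tnth A k].
  by apply/seteqP; split=> x bx k; rewrite /= ?in_itv; [move=> _|]; exact: bx.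
apply: fin_bigcap_measurable => [|k _]; first exact: finite_finset.
by rewrite -[X in measurable X]setTI; exact: measurable_tnth.
Qed.

Lemma l1dist_ge0 n (x y : n.-tuple R) : 0 <= l1dist x y.
Proof. exact: sumr_ge0. Qed.

Lemma l1dist_cons n (s t : R) (x y : n.-tuple R) :
  l1dist [tuple of s :: x] [tuple of t :: y] = `|s - t| + l1dist x y.
Proof.
by rewrite /l1dist big_ord_recl; congr +%R; apply: eq_bigr => k _; rewrite !tnthS.
Qed.

Lemma measurable_l1dist n (y : n.-tuple R) :
  measurable_fun setT (fun x => l1dist x y).
Proof.
apply: measurable_sum => k; apply: measurableT_comp => //.
by apply: measurable_funB => //; exact: measurable_tnth.
Qed.

Lemma lebesgue_tuple_box n (A : n.-tuple R) : (forall k, 0 <= tnth A k) ->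
  lebesgue_tuple R n (box A) = (\prod_(k < n) tnth A k)%:E.
Proof.
elim: n A => [|n IH] A A0.
  have -> : box A = setT by apply/seteqP; split=> // x _ [].
  by rewrite big_ord0 /= diracT.
case/tupleP: A A0 => a A A0; have a0 : 0 <= a := A0 ord0.
rewrite /= /lebesgue_cons /pushforward preimage_cons_pair_box.
rewrite product_measure1E; last 2 first.
- exact: measurable_itv.
- exact: measurable_box.
rewrite big_tnth_cons EFinM; congr (_ * _)%E; first exact: lebesgue_measure_itv0.
by apply: IH => k; have := A0 (lift ord0 k); rewrite tnthS.
Qed.

End box.

Section integral_setX.
Local Open Scope ereal_scope.
Context d1 d2 (T1 : measurableType d1) (T2 : measurableType d2) (R : realType).
Variables (m1 : {sigma_finite_measure set T1 -> \bar R})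
  (m2 : {sigma_finite_measure set T2 -> \bar R}).
Variables (I : set T1) (B : set T2).
Hypotheses (mI : measurable I) (mB : measurable B).

Lemma ge0_integral_setX (f : T1 * T2 -> \bar R) :
  measurable_fun setT f -> (forall p, 0 <= f p) ->
  \int[m1 \x m2]_(p in I `*` B) f p = \int[m1]_(x in I) \int[m2]_(y in B) f (x, y).
Proof.
move=> mf f0; rewrite integral_mkcond fubini_tonelli1; last 2 first.
- apply/(measurable_restrictT _ _).1; first exact: measurableX.
  exact: measurable_funTS.
- by move=> p; apply: erestrict_ge0 => q _; exact: f0.
rewrite [RHS]integral_mkcond; apply: eq_integral => x _.
rewrite /fubini_F patchE; case: ifPn => xI.
  rewrite [RHS]integral_mkcond; apply: eq_integral => y _.
  by rewrite !patchE in_setX xI.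
rewrite -[RHS](integral0 m2 setT); apply: eq_integral => y _.
by rewrite patchE in_setX (negbTE xI).
Qed.

Lemma ge0_integral_setX_fst (g : T1 -> \bar R) :
  measurable_fun setT g -> (forall x, 0 <= g x) ->
  \int[m1 \x m2]_(p in I `*` B) g p.1 = (\int[m1]_(x in I) g x) * m2 B.
Proof.
move=> mg g0; rewrite ge0_integral_setX //; last exact: measurableT_comp.
rewrite -ge0_integralZr //; last exact: measurable_funTS.
by apply: eq_integral => x _; exact: (integral_cst m2 mB (g x)).
Qed.

Lemma ge0_integral_setX_snd (h : T2 -> \bar R) :
  measurable_fun setT h -> (forall y, 0 <= h y) ->
  \int[m1 \x m2]_(p in I `*` B) h p.2 = (\int[m2]_(y in B) h y) * m1 I.
Proof.
move=> mh h0; rewrite ge0_integral_setX //; last exact: measurableT_comp.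
exact: (integral_cst m1 mI (\int[m2]_(y in B) h y)).
Qed.

End integral_setX.

Section abs_sub_integral.
Context (R : realType).

Lemma integral_affine_itv (a c e : R) : 0 < a ->
  (\int[lebesgue_measure]_(t in `[0%R, a]) (c + e * t)%:E =
     (c * a + e * a ^+ 2 / 2)%:E)%E.
Proof.
move=> a0; pose F t := c * t + e / 2 * t ^+ 2.
have dF (t : R) : is_derive t (1 : R) F (c + e * t).
  by apply: is_derive_eq; rewrite /GRing.scale /= !mulr1 mulr2n; field.
have exF (t : R) : derivable F t 1 := @ex_derive _ _ _ _ _ _ _ (dF t).
have cF (t : R) : {for t, continuous F}.
  by apply/differentiable_continuous; rewrite -derivable1_diffP.
rewrite (@continuous_FTC2 _ _ F) //.
- by rewrite -EFinB /F expr0n /=; congr EFin; field.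
- apply: continuous_subspaceT => t; apply: continuousD; first exact: cst_continuous.
  by apply: continuousM; [exact: cst_continuous|exact: cvg_id].
- split; first by move=> t _; exact: exF.
  + exact: cvg_at_right_filter (cF 0).
  + exact: cvg_at_left_filter (cF a).
- by move=> t _; rewrite derive1E; exact: (@derive_val _ _ _ _ _ _ _ (dF t)).
Qed.

(* The chord of the convex function t |-> |t - y| over [0, a] has integral
   a^2 / 2 whatever y is. *)
Lemma integral_abs_sub_itv (a y : R) : 0 < a -> 0 <= y <= a ->
  (\int[lebesgue_measure]_(t in `[0%R, a]) (`|t - y|)%:E <= (a ^+ 2 / 2)%:E)%E.
Proof.
move=> a0 /andP[y0 ya]; pose e := (a - 2 * y) / a.
have chord t : 0 <= t <= a -> `|t - y| <= y + e * t.
  move=> /andP[t0 ta].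
  have -> : y + e * t = (y * (a - t) + (a - y) * t) / a.
    by rewrite /e; field; exact: lt0r_neq0.
  by rewrite ler_pdivlMr //; have [ty|ty] := lerP y t; nra.
have -> : (a ^+ 2 / 2)%:E =
    (\int[lebesgue_measure]_(t in `[0%R, a]) (y + e * t)%:E)%E.
  by rewrite integral_affine_itv //; congr EFin; rewrite /e; field; exact: lt0r_neq0.
apply: ge0_le_integral => [//|//| | |t].
- apply/measurable_EFinP; apply: measurable_funTS.
  by apply: measurableT_comp => //; exact: measurable_funB.
- apply/measurable_EFinP; apply: measurable_funTS.
  by apply: measurable_funD => //; exact: measurable_funM.
- by rewrite /= in_itv lee_fin => /chord.
Qed.

End abs_sub_integral.

Section l1dist_integral.
Context (R : realType).

Lemma integral_l1dist_cons n
    (m : {sigma_finite_measure set (n.-tuple R) -> \bar R})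
    (a t : R) (A y : n.-tuple R) : 0 <= a ->
  (\int[lebesgue_cons m]_(x in box [tuple of a :: A])
      (l1dist x [tuple of t :: y])%:E =
   (\int[lebesgue_measure]_(s in `[0%R, a]) (`|s - t|)%:E) * m (box A) +
   (\int[m]_(x in box A) (l1dist x y)%:E) * a%:E)%E.
Proof.
move=> a0; have mI : measurable (`[0%R, a] : set R) by exact: measurable_itv.
have mabs : measurable_fun setT (fun s : R => (`|s - t|)%:E).
  by apply/measurable_EFinP; apply: measurableT_comp => //; exact: measurable_funB.
have ml1 : measurable_fun setT (fun x => (l1dist x y)%:E).
  by apply/measurable_EFinP; exact: measurable_l1dist.
rewrite ge0_integral_pushforward; last 4 first.
- exact: measurable_cons_pair.
- exact: measurable_box.
- by apply/measurable_EFinP; apply: measurable_funTS; exact: measurable_l1dist.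
- by move=> x _; rewrite lee_fin l1dist_ge0.
rewrite preimage_cons_pair_box.
under eq_integral do rewrite /= l1dist_cons EFinD.
rewrite ge0_integralD //; last 4 first.
- by apply: measurableX => //; exact: measurable_box.
- by apply: measurable_funTS; exact: measurableT_comp mabs _.
- by move=> p _; rewrite lee_fin l1dist_ge0.
- by apply: measurable_funTS; exact: measurableT_comp ml1 _.
have mbox := measurable_box A.
congr (_ + _)%E.
  apply: (ge0_integral_setX_fst (@lebesgue_measure R) m mI mbox mabs).
  by move=> s; rewrite lee_fin.
rewrite -lebesgue_measure_itv0 //.
apply: (ge0_integral_setX_snd (@lebesgue_measure R) m mI mbox ml1).
by move=> x; rewrite lee_fin l1dist_ge0.
Qed.

Lemma integral_l1dist_box n (A y : n.-tuple R) :
  (forall k, 0 < tnth A k) -> box A y ->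
  (\int[lebesgue_tuple R n]_(x in box A) (l1dist x y)%:E <=
     ((\prod_(k < n) tnth A k) * (\sum_(k < n) tnth A k) / 2)%:E)%E.
Proof.
elim: n A y => [|n IH] A y A0 yA.
  rewrite !big_ord0 mul1r mul0r (_ : (fun x => _) = cst 0%E) ?integral0 //.
  by apply/funext => x; rewrite /l1dist big_ord0.
case/tupleP: A A0 yA => a A A0; case/tupleP: y => t y /box_cons[ta yA].
have a0 : 0 < a := A0 ord0.
have {}A0 k : 0 < tnth A k by have := A0 (lift ord0 k); rewrite tnthS.
rewrite /= integral_l1dist_cons ?(ltW a0) // lebesgue_tuple_box => [|k]; last first.
  exact: ltW.
rewrite !big_tnth_cons; set P := \prod_(k < n) tnth A k; set S := \sum_(k < n) tnth A k.
have P0 : 0 <= P by apply: prodr_ge0 => k _; exact: ltW.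
have -> : a * P * (a + S) / 2 = a ^+ 2 / 2 * P + P * S / 2 * a by field.
rewrite EFinD !EFinM; apply: leeD; apply: lee_wpmul2r; rewrite ?lee_fin ?(ltW a0) //.
  exact: integral_abs_sub_itv.
exact: IH.
Qed.

End l1dist_integral.

Lemma lipschitz_l1_box_ge0 (R : realType) K (A : K.-tuple R)
    (f : K.-tuple R -> R) (L : R) :
  (0 < K)%N -> (forall k, 0 < tnth A k) -> lipschitz_l1_on (box A) f L -> 0 <= L.
Proof.
move=> K0 A0 Lf; pose o := [tuple of nseq K (0 : R)].
have bA : box A A by move=> k; rewrite lexx ltW.
have bo : box A o by move=> k; rewrite tnth_nseq lexx ltW.
have dAo : 0 < l1dist A o.
  rewrite /l1dist (bigD1 (Ordinal K0)) //= tnth_nseq subr0 gtr0_norm ?A0 //.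
  by rewrite ltr_wpDr ?A0 // sumr_ge0.
by rewrite -(pmulr_lge0 _ dAo); exact: le_trans (normr_ge0 _) (Lf _ _ bA bo).
Qed.

Lemma integral_abs_lipschitz_l1_box (R : realType) K (A : K.-tuple R)
    (f : K.-tuple R -> R) (L : R) (y : K.-tuple R) :
  (forall k, 0 < tnth A k) -> lipschitz_l1_on (box A) f L -> box A y -> f y = 0 ->
  (\int[@lebesgueK R K]_(x in box A) (`|f x|)%:E <=
     (L / 2 * (\prod_(k < K) tnth A k) * (\sum_(k < K) tnth A k))%:E)%E.
Proof.
move=> A0 Lf yA fy0; rewrite -lebesgue_tupleE.
have fle x : box A x -> `|f x| <= L * l1dist x y.
  by move=> xA; have := Lf x y xA yA; rewrite fy0 subr0.
have int_le : (\int[lebesgue_tuple R K]_(x in box A) (`|f x|)%:E <=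
    \int[lebesgue_tuple R K]_(x in box A) (L * l1dist x y)%:E)%E.
  by apply: ge0_le_integral_nomeas => x xA; rewrite lee_fin ?fle.
apply: le_trans int_le _.
case: K => [|K] in A f y A0 Lf yA fy0 fle *.
  have d0 x : l1dist x y = 0 by rewrite /l1dist big_ord0.
  rewrite !big_ord0 mulr0 (eq_integral (cst 0%E)) ?integral0 // => x _.
  by rewrite d0 mulr0.
have L0 := lipschitz_l1_box_ge0 (ltn0Sn K) A0 Lf.
under eq_integral do rewrite EFinM.
rewrite ge0_integralZl_EFin //; last 3 first.
- exact: measurable_box.
- by move=> x _; rewrite lee_fin l1dist_ge0.
- by apply/measurable_EFinP; apply: measurable_funTS; exact: measurable_l1dist.
set P := \prod_(k < K.+1) tnth A k; set S := \sum_(k < K.+1) tnth A k.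
have -> : L / 2 * P * S = L * (P * S / 2) by field.
by rewrite EFinM lee_wpmul2l ?lee_fin // integral_l1dist_box.
Qed.

Theorem lemma2 (R : realType) (K : nat) :
  (forall (A : K.-tuple R) (f : K.-tuple R -> R) (L : R) (y : K.-tuple R),
      (forall k : 'I_K, 0 < tnth A k) ->
      lipschitz_l1_on (box A) f L ->
      box A y -> f y = 0 ->
      (\int[@lebesgueK R K]_(x in box A) (`|f x|)%:E <=
         (L / 2 * (\prod_(k < K) tnth A k) * (\sum_(k < K) tnth A k))%:E)%E)
  /\
  (forall (eps : R) (f : K.-tuple R -> R) (L : R) (y : K.-tuple R),
      0 < eps ->
      lipschitz_l1_on (box [tuple of nseq K eps]) f L ->
      box [tuple of nseq K eps] y -> f y = 0 ->
      (\int[@lebesgueK R K]_(x in box [tuple of nseq K eps]) (`|f x|)%:E <=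
         (eps ^+ K.+1 * (L * K%:R / 2))%:E)%E).
Proof.
split=> [|eps f L y eps0 Lf yA fy0]; first exact: integral_abs_lipschitz_l1_box.
have A0 k : 0 < tnth [tuple of nseq K eps] k by rewrite tnth_nseq.
apply: le_trans (integral_abs_lipschitz_l1_box A0 Lf yA fy0) _.
under eq_bigr do rewrite tnth_nseq.
under [X in _ * X]eq_bigr do rewrite tnth_nseq.
rewrite prodr_const sumr_const card_ord -[eps *+ K]mulr_natr.
have -> : L / 2 * eps ^+ K * (eps * K%:R) = eps ^+ K.+1 * (L * K%:R / 2).
  by rewrite exprS; field.
by [].
Qed.
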